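(* Let $X$ be a finite connected poset, $F$ a field and $\varphi$ a Jordan automorphism of $I(X,F)$ such that $\varphi(e_x)=e_{\lambda(x)}$ for all $x\in X$, for some bijection $\lambda:X\to X$. Then $\lambda$ is either an order automorphism or an order anti-automorphism of $X$.
   Context: $I(X,F)$ is the incidence algebra of the locally finite poset $X$ over $F$ (functions $f:X\times X\to F$ vanishing unless $x\le y$, with product $(fg)(x,y)=\sum_{x\le z\le y}f(x,z)g(z,y)$). For $x\le y$, $e_{xy}$ is the function equal to $1$ at $(x,y)$ and $0$ elsewhere, and $e_x:=e_{xx}$. A poset is connected if any two elements are joined by a finite sequence of elements in which consecutive elements are comparable. A Jordan automorphism of an associative algebra $A$ is a bijective linear map $\varphi:A\to A$ with $\varphi(a^2)=\varphi(a)^2$ and $\varphi(aba)=\varphi(a)\varphi(b)\varphi(a)$ for all $a,b\in A$. An order automorphism (resp. anti-automorphism) of $X$ is a bijection $\lambda$ such that $\lambda$ and $\lambda^{-1}$ are order-preserving (resp. order-reversing). *)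

From HB Require Import structures.
From mathcomp Require Import all_boot all_order all_algebra.
Set Implicit Arguments. Unset Strict Implicit. Unset Printing Implicit Defensive.
Import Order.TTheory GRing.Theory.
Local Open Scope ring_scope.
Local Open Scope order_scope.

Section Incidence.
Variables (d : Order.disp_t) (X : finPOrderType d) (F : fieldType).

Definition incidence_pred : pred {ffun X * X -> F} :=
  fun f => [forall p : X * X, ~~ (p.1 <= p.2) ==> (f p == 0)].

Definition incidence := {f : {ffun X * X -> F} | incidence_pred f}.

Definition inc_val (f : incidence) : {ffun X * X -> F} := sval f.

Lemma inc_vanish (f : incidence) (p : X * X) :
  ~~ (p.1 <= p.2) -> inc_val f p = 0.
Proof.
case: f => g /= /forallP H Hp; exact/eqP/(implyP (H p) Hp).
Qed.

Definition inc_add_fun (f g : incidence) : {ffun X * X -> F} :=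
  [ffun p => inc_val f p + inc_val g p].
Lemma inc_add_subproof f g : incidence_pred (inc_add_fun f g).
Proof.
apply/forallP=> p; apply/implyP=> Hp.
by rewrite ffunE !inc_vanish // addr0.
Qed.
Definition inc_add (f g : incidence) : incidence :=
  exist _ (inc_add_fun f g) (inc_add_subproof f g).

Definition inc_scale_fun (a : F) (f : incidence) : {ffun X * X -> F} :=
  [ffun p => a * inc_val f p].
Lemma inc_scale_subproof a f : incidence_pred (inc_scale_fun a f).
Proof.
apply/forallP=> p; apply/implyP=> Hp.
by rewrite ffunE !inc_vanish // mulr0.
Qed.
Definition inc_scale (a : F) (f : incidence) : incidence :=
  exist _ (inc_scale_fun a f) (inc_scale_subproof a f).

Definition inc_mul_fun (f g : incidence) : {ffun X * X -> F} :=
  [ffun p => \sum_(z : X | (p.1 <= z) && (z <= p.2))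
               inc_val f (p.1, z) * inc_val g (z, p.2)].
Lemma inc_mul_subproof f g : incidence_pred (inc_mul_fun f g).
Proof.
apply/forallP=> p; apply/implyP=> Hp; rewrite ffunE.
apply/eqP; apply: big_pred0 => z; apply/negbTE/negP => /andP[h1 h2].
by move/negP: Hp; apply; exact: le_trans h1 h2.
Qed.
Definition inc_mul (f g : incidence) : incidence :=
  exist _ (inc_mul_fun f g) (inc_mul_subproof f g).

Definition inc_e_fun (x : X) : {ffun X * X -> F} :=
  [ffun p => ((p.1 == x) && (p.2 == x))%:R].
Lemma inc_e_subproof x : incidence_pred (inc_e_fun x).
Proof.
apply/forallP=> p; apply/implyP=> Hp; rewrite ffunE.
case: (p.1 =P x) => [h1|]//=; case: (p.2 =P x) => [h2|]//=.
by move/negP: Hp; rewrite h1 h2 lexx.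
Qed.
Definition inc_e (x : X) : incidence :=
  exist _ (inc_e_fun x) (inc_e_subproof x).

Definition jordan_automorphism (phi : incidence -> incidence) : Prop :=
  [/\ bijective phi,
      (forall (a : F) (f g : incidence),
          phi (inc_add (inc_scale a f) g) = inc_add (inc_scale a (phi f)) (phi g)),
      (forall f : incidence, phi (inc_mul f f) = inc_mul (phi f) (phi f)) &
      (forall f g : incidence,
          phi (inc_mul (inc_mul f g) f) = inc_mul (inc_mul (phi f) (phi g)) (phi f))].

End Incidence.

Section PosetDefs.
Variables (d : Order.disp_t) (X : porderType d).

Definition poset_connected (Y : finPOrderType d) : Prop :=
  forall x y : Y, connect (fun a b : Y => (a >=< b)%O) x y.

Definition order_automorphism (lam : X -> X) : Prop :=
  [/\ bijective lam,
      (forall x y, x <= y -> lam x <= lam y) &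
      (forall x y, lam x <= lam y -> x <= y)].

Definition order_anti_automorphism (lam : X -> X) : Prop :=
  [/\ bijective lam,
      (forall x y, x <= y -> lam y <= lam x) &
      (forall x y, lam y <= lam x -> x <= y)].

End PosetDefs.

(* Write f o g = fg + gf.  For a < b we have e_a o e_ab = e_ab = e_b o e_ab, so phi(e_ab)
   lies in the Peirce 1/2-spaces of both e_(lam a) and e_(lam b): it is a nonzero multiple
   of e_(lam a, lam b) or of e_(lam b, lam a), and lam a, lam b are comparable.  Whether lam
   keeps or reverses a comparable pair is the same for any two pairs sharing an element,
   because e_ab o e_bc = e_ac is nonzero while e_ab o e_ac = 0 = e_ba o e_ca, and the
   images of these products are zero or not according to the orientations.  By
   connectedness lam is monotone or antitone on strict inequalities; the same argument for
   phi^-1 and lam^-1 shows that lam reflects comparability. *)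

From mathcomp Require Import all_boot all_order all_algebra.
Set Implicit Arguments. Unset Strict Implicit. Unset Printing Implicit Defensive.
Import Order.TTheory GRing.Theory.
Local Open Scope ring_scope.
Local Open Scope order_scope.

Section IncidenceAlgebra.
Variables (d : Order.disp_t) (X : finPOrderType d) (F : fieldType).
Notation I := (incidence X F).

Lemma inc_ext (f g : I) : (forall p, inc_val f p = inc_val g p) -> f = g.
Proof. by move=> fg; apply: val_inj; apply/ffunP. Qed.

Lemma inc_addE (f g : I) p : inc_val (inc_add f g) p = inc_val f p + inc_val g p.
Proof. by rewrite ffunE. Qed.

Lemma inc_mulE (f g : I) x y :
  inc_val (inc_mul f g) (x, y) = \sum_z inc_val f (x, z) * inc_val g (z, y).
Proof.
rewrite ffunE /= big_mkcond; apply: eq_bigr => z _; case: ifPn => //.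
rewrite negb_and => /orP[xz | zy].
  by rewrite (@inc_vanish _ _ _ f (x, z)) ?mul0r.
by rewrite (@inc_vanish _ _ _ g (z, y)) ?mulr0.
Qed.

Lemma inc0_subproof : @incidence_pred d X F [ffun=> 0].
Proof. by apply/forallP => p; rewrite ffunE eqxx implybT. Qed.
Definition inc0 : I := exist _ [ffun=> 0] inc0_subproof.

Lemma inc0E p : inc_val inc0 p = 0.
Proof. by rewrite ffunE. Qed.

Lemma inc_addr0 (f : I) : inc_add f inc0 = f.
Proof. by apply: inc_ext => p; rewrite inc_addE inc0E addr0. Qed.

Lemma inc_scale1 (f : I) : inc_scale 1 f = f.
Proof. by apply: inc_ext => p; rewrite ffunE mul1r. Qed.

Lemma inc_neq0 (f : I) : f <> inc0 -> exists u v, inc_val f (u, v) != 0.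
Proof.
move=> fN0; have [/existsP[[u v] fuv] | /existsPn f0] := boolP [exists p, inc_val f p != 0].
  by exists u, v.
by case: fN0; apply: inc_ext => p; rewrite inc0E; apply/eqP; rewrite -[_ == 0]negbK f0.
Qed.

(* The paper's e_{xy}; the guard [x <= y] makes it an element of I(X,F) for every pair. *)
Definition inc_elem_fun (x y : X) : {ffun X * X -> F} :=
  [ffun p => ((p.1 == x) && (p.2 == y) && (x <= y))%:R].
Lemma inc_elem_subproof x y : incidence_pred (inc_elem_fun x y).
Proof.
apply/forallP => -[u v]; apply/implyP => /= uv; rewrite ffunE /=.
by case: (u =P x) => [<-|_]; case: (v =P y) => [<-|_]; rewrite ?(negbTE uv) ?andbF.
Qed.
Definition inc_elem x y : I := exist _ (inc_elem_fun x y) (inc_elem_subproof x y).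

Lemma inc_elemE x y u v : x <= y ->
  inc_val (inc_elem x y) (u, v) = ((u == x) && (v == y))%:R.
Proof. by move=> xy; rewrite ffunE /= xy andbT. Qed.

Lemma inc_eE (x u v : X) : inc_val (inc_e F x) (u, v) = ((u == x) && (v == x))%:R.
Proof. by rewrite ffunE. Qed.

Lemma inc_elem_neq0 x y : x <= y -> inc_elem x y <> inc0.
Proof.
move=> xy /(congr1 (fun h : I => inc_val h (x, y))).
by rewrite inc_elemE // inc0E !eqxx => /eqP; rewrite oner_eq0.
Qed.

Lemma inc_e_inj : injective (@inc_e d X F).
Proof.
move=> x y /(congr1 (fun h : I => inc_val h (x, x))); rewrite !inc_eE eqxx.
by case: eqP => // _ /eqP; rewrite oner_eq0.
Qed.

Lemma inc_neq0_le (f : I) u v : inc_val f (u, v) != 0 -> u <= v.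
Proof. by apply: contraTT => /(@inc_vanish _ _ _ f (u, v)) ->; rewrite eqxx. Qed.

Definition supported_at (f : I) (s t : X) :=
  forall u v, inc_val f (u, v) != 0 -> (u == s) && (v == t).

Lemma supported_atE f s t u v : supported_at f s t ->
  inc_val f (u, v) = if (u == s) && (v == t) then inc_val f (s, t) else 0.
Proof.
move=> fst; case: ifPn => [/andP[/eqP-> /eqP->] // | Nuv].
by apply/eqP; apply: contraNT Nuv; apply: fst.
Qed.

Lemma supported_at_neq0 f s t :
  supported_at f s t -> f <> inc0 -> inc_val f (s, t) != 0.
Proof.
move=> fst fN0; have [u [v fuv]] := inc_neq0 fN0.
by have /andP[/eqP<- /eqP<-] := fst u v fuv.
Qed.

Lemma supported_at_elem x y : x <= y -> supported_at (inc_elem x y) x y.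
Proof. by move=> xy u v; rewrite inc_elemE //; case: (_ && _); rewrite ?eqxx. Qed.

Lemma inc_mul_supportedE f g s1 t1 s2 t2 u v :
  supported_at f s1 t1 -> supported_at g s2 t2 ->
  inc_val (inc_mul f g) (u, v) =
  if [&& u == s1, t1 == s2 & v == t2] then inc_val f (s1, t1) * inc_val g (s2, t2)
  else 0.
Proof.
move=> fst gst; rewrite inc_mulE (bigD1 t1) //= big1 ?addr0; last first.
  by move=> z zt1; rewrite (supported_atE _ _ fst) (negbTE zt1) andbF mul0r.
rewrite (supported_atE _ _ fst) (supported_atE _ _ gst) eqxx andbT.
by case: (u == s1); case: (t1 == s2); case: (v == t2); rewrite ?mul0r ?mulr0.
Qed.

Definition jordan (f g : I) : I := inc_add (inc_mul f g) (inc_mul g f).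

Lemma jordanC f g : jordan f g = jordan g f.
Proof. by apply: inc_ext => p; rewrite !inc_addE addrC. Qed.

Lemma inc_sqrD f g : inc_mul (inc_add f g) (inc_add f g) =
  inc_add (inc_add (inc_mul f f) (jordan f g)) (inc_mul g g).
Proof.
apply: inc_ext => -[u v]; rewrite !inc_addE !inc_mulE -!big_split.
apply: eq_bigr => z _; rewrite !inc_addE mulrDl !mulrDr !addrA.
exact: (esym (congr1 (fun w => w + _) (addrA _ _ _))).
Qed.

Lemma jordan_supported_eq0 f g s1 t1 s2 t2 :
  supported_at f s1 t1 -> supported_at g s2 t2 -> t1 != s2 -> t2 != s1 ->
  jordan f g = inc0.
Proof.
move=> fst gst t1s2 t2s1; apply: inc_ext => -[u v].
rewrite inc_addE (inc_mul_supportedE _ _ fst gst) (inc_mul_supportedE _ _ gst fst).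
by rewrite (negbTE t1s2) (negbTE t2s1) !andbF addr0 inc0E.
Qed.

Lemma jordan_supported_neq0 f g s t w :
  supported_at f s t -> supported_at g t w -> s != t ->
  inc_val f (s, t) != 0 -> inc_val g (t, w) != 0 -> jordan f g <> inc0.
Proof.
move=> fst gtw st fN0 gN0 /(congr1 (fun h : I => inc_val h (s, w))).
rewrite inc_addE (inc_mul_supportedE _ _ fst gtw) (inc_mul_supportedE _ _ gtw fst).
rewrite (negbTE st) !eqxx addr0 inc0E => /eqP.
by rewrite mulf_eq0 (negbTE fN0) (negbTE gN0).
Qed.

Lemma jordan_eE w f u v : inc_val (jordan (inc_e F w) f) (u, v) =
  (if u == w then inc_val f (w, v) else 0) + (if v == w then inc_val f (u, w) else 0).
Proof.
rewrite inc_addE !inc_mulE (bigD1 w) //= big1 ?addr0; last first.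
  by move=> z /negbTE zw; rewrite inc_eE zw andbF mul0r.
rewrite (bigD1 w) //= big1 ?addr0; last first.
  by move=> z /negbTE zw; rewrite inc_eE zw mulr0.
rewrite !inc_eE !eqxx !andbT.
by case: (u == w); case: (v == w); rewrite ?mul1r ?mul0r ?mulr1 ?mulr0.
Qed.

(* [f] lies in the Peirce 1/2-space [e_w I (1 - e_w) + (1 - e_w) I e_w] of [e_w]. *)
Lemma jordan_e_fixed w f : jordan (inc_e F w) f = f ->
  forall u v, inc_val f (u, v) != 0 -> (u == w) != (v == w).
Proof.
move=> fixed u v; have := congr1 (fun h : I => inc_val h (u, v)) fixed.
rewrite jordan_eE; case: (eqVneq u w) => [->|uw]; case: (eqVneq v w) => [->|vw] //=.
  by move/(canRL (addrK _)); rewrite subrr => <-; rewrite eqxx.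
by rewrite addr0 => <-; rewrite eqxx.
Qed.

Lemma jordan_e_elem a b w : a < b -> (w == a) || (w == b) ->
  jordan (inc_e F w) (inc_elem a b) = inc_elem a b.
Proof.
move=> ab wab; apply: inc_ext => -[u v]; rewrite jordan_eE !inc_elemE ?ltW //.
case/orP: wab => /eqP->; rewrite eqxx ?andbT.
  by rewrite (lt_eqF ab) andbF if_same addr0; case: (u == a).
by rewrite (gt_eqF ab) /= if_same add0r; case: (v == b); case: (u == a).
Qed.

Lemma jordan_elem_chain a b c : a <= b -> b <= c -> a != c ->
  jordan (inc_elem a b) (inc_elem b c) = inc_elem a c.
Proof.
move=> ab bc ac; apply: inc_ext => -[u v]; rewrite inc_addE.
rewrite (inc_mul_supportedE _ _ (supported_at_elem ab) (supported_at_elem bc)).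
rewrite (inc_mul_supportedE _ _ (supported_at_elem bc) (supported_at_elem ab)).
rewrite !inc_elemE ?(le_trans ab bc) // (eq_sym c a) (negbTE ac) !eqxx andbF addr0 mulr1.
by case: (u == a); case: (v == c).
Qed.

End IncidenceAlgebra.

Arguments inc0 {d X F}.

Section JordanEmbedding.
Variables (d : Order.disp_t) (X : finPOrderType d) (F : fieldType).
Notation I := (incidence X F).

Definition jordan_embedding (phi : I -> I) (lam : X -> X) : Prop :=
  [/\ phi inc0 = inc0, {morph phi : f g / jordan f g}, injective phi &
      forall x, phi (inc_e F x) = inc_e F (lam x)].

Variables (phi : I -> I) (lam : X -> X).
Hypothesis Hphi : jordan_embedding phi lam.

Let phi0 : phi inc0 = inc0. Proof. by case: Hphi. Qed.
Let phiJ : {morph phi : f g / jordan f g}. Proof. by case: Hphi. Qed.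
Let phi_inj : injective phi. Proof. by case: Hphi. Qed.
Let phi_e x : phi (inc_e F x) = inc_e F (lam x). Proof. by case: Hphi. Qed.

Lemma lam_inj : injective lam.
Proof. by move=> x y /(congr1 (inc_e F)); rewrite -!phi_e => /phi_inj/inc_e_inj. Qed.

Lemma phi_neq0 f : f <> inc0 -> phi f <> inc0.
Proof. by move=> fN0; rewrite -phi0 => /phi_inj. Qed.

Lemma lam_lt_neq a b : a < b -> lam a != lam b.
Proof. by rewrite (inj_eq lam_inj) => /lt_eqF->. Qed.

Lemma phi_elem_support a b u v : a < b ->
  inc_val (phi (inc_elem F a b)) (u, v) != 0 ->
  (u == lam a) && (v == lam b) || (u == lam b) && (v == lam a).
Proof.
move=> ab fuv; have lab := lam_lt_neq ab.
have one_end w : (w == a) || (w == b) -> (u == lam w) != (v == lam w).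
  by move=> w_ab; apply: jordan_e_fixed fuv; rewrite -phi_e -phiJ jordan_e_elem.
move: (one_end a) (one_end b); rewrite !eqxx orbT => /(_ isT) ua /(_ isT) ub.
case: (eqVneq u (lam a)) ua ub => [-> | _].
  by rewrite (negbTE lab); case: (v == lam a); case: (v == lam b).
case: (eqVneq v (lam a)) => [-> | _] //= _.
by rewrite (negbTE lab); case: (u == lam b).
Qed.

Lemma lam_lt_total a b : a < b -> (lam a < lam b) || (lam b < lam a).
Proof.
move=> ab; have [u [v fuv]] := inc_neq0 (phi_neq0 (inc_elem_neq0 (ltW ab))).
have uv := inc_neq0_le fuv; have lab := lam_lt_neq ab.
case/orP: (phi_elem_support ab fuv) => /andP[/eqP eu /eqP ev]; move: uv; rewrite eu ev.
  by rewrite le_eqVlt (negbTE lab) /= => ->.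
by rewrite le_eqVlt eq_sym (negbTE lab) /= => ->; rewrite orbT.
Qed.

Lemma phi_elem_supported a b : a < b ->
  supported_at (phi (inc_elem F a b)) (Order.min (lam a) (lam b)) (Order.max (lam a) (lam b)).
Proof.
move=> ab u v fuv; have uv := inc_neq0_le fuv.
rewrite minElt maxElt; case/orP: (lam_lt_total ab) => [lab | lba].
  rewrite lab; case/orP: (phi_elem_support ab fuv) => /andP[/eqP eu /eqP ev].
    by rewrite eu ev !eqxx.
  by move: uv; rewrite eu ev (lt_geF lab).
rewrite (lt_gtF lba); case/orP: (phi_elem_support ab fuv) => /andP[/eqP eu /eqP ev].
  by move: uv; rewrite eu ev (lt_geF lba).
by rewrite eu ev !eqxx.
Qed.

Lemma phi_elem_neq0 a b : a < b ->
  inc_val (phi (inc_elem F a b)) (Order.min (lam a) (lam b), Order.max (lam a) (lam b)) != 0.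
Proof.
move=> ab; apply: supported_at_neq0 (phi_elem_supported ab) _.
exact/phi_neq0/inc_elem_neq0/ltW.
Qed.

Lemma lam_lt_chain a b c : a < b -> b < c -> (lam a < lam b) = (lam b < lam c).
Proof.
move=> ab bc; have ac := lt_trans ab bc.
have := phi_neq0 (inc_elem_neq0 (ltW ac)).
rewrite -(jordan_elem_chain F (ltW ab) (ltW bc) (negbT (lt_eqF ac))) phiJ.
have := jordan_supported_eq0 (phi_elem_supported ab) (phi_elem_supported bc).
rewrite !minElt !maxElt.
case/orP: (lam_lt_total ab) => oab; case/orP: (lam_lt_total bc) => obc;
  rewrite ?oab ?obc ?(lt_gtF oab) ?(lt_gtF obc) //.
all: move=> eq0 []; apply: eq0;
  by rewrite (inj_eq lam_inj) ?(lt_eqF ab) ?(gt_eqF ab) ?(lt_eqF bc) ?(gt_eqF bc).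
Qed.

Lemma lam_lt_common_min a b c : a < b -> a < c -> (lam a < lam b) = (lam a < lam c).
Proof.
move=> ab ac.
have J0 : jordan (phi (inc_elem F a b)) (phi (inc_elem F a c)) = inc0.
  rewrite -phiJ (jordan_supported_eq0 (supported_at_elem (ltW ab)) (supported_at_elem (ltW ac))).
  - exact: phi0.
  - by rewrite (gt_eqF ab).
  - by rewrite (gt_eqF ac).
have Sab := phi_elem_supported ab; have Sac := phi_elem_supported ac.
have Nab := phi_elem_neq0 ab; have Nac := phi_elem_neq0 ac.
rewrite !minElt !maxElt in Sab Sac Nab Nac.
case/orP: (lam_lt_total ab) => oab; case/orP: (lam_lt_total ac) => oac;
  rewrite ?oab ?oac ?(lt_gtF oab) ?(lt_gtF oac) // in Sab Sac Nab Nac *.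
  case: (jordan_supported_neq0 Sac Sab _ Nac Nab); last by rewrite jordanC J0.
  by rewrite eq_sym lam_lt_neq.
case: (jordan_supported_neq0 Sab Sac _ Nab Nac); last by rewrite J0.
by rewrite eq_sym lam_lt_neq.
Qed.

Lemma lam_lt_common_max a b c : b < a -> c < a -> (lam b < lam a) = (lam c < lam a).
Proof.
move=> ba ca.
have J0 : jordan (phi (inc_elem F b a)) (phi (inc_elem F c a)) = inc0.
  rewrite -phiJ (jordan_supported_eq0 (supported_at_elem (ltW ba)) (supported_at_elem (ltW ca))).
  - exact: phi0.
  - by rewrite (gt_eqF ca).
  - by rewrite (gt_eqF ba).
have Sba := phi_elem_supported ba; have Sca := phi_elem_supported ca.
have Nba := phi_elem_neq0 ba; have Nca := phi_elem_neq0 ca.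
rewrite !minElt !maxElt in Sba Sca Nba Nca.
case/orP: (lam_lt_total ba) => oba; case/orP: (lam_lt_total ca) => oca;
  rewrite ?oba ?oca ?(lt_gtF oba) ?(lt_gtF oca) // in Sba Sca Nba Nca *.
  case: (jordan_supported_neq0 Sba Sca _ Nba Nca); last by rewrite J0.
  by rewrite lam_lt_neq.
case: (jordan_supported_neq0 Sca Sba _ Nca Nba); last by rewrite jordanC J0.
by rewrite lam_lt_neq.
Qed.

Definition keeps_order (x y : X) := if x < y then lam x < lam y else lam y < lam x.

Lemma keeps_orderC x y : (x < y) || (y < x) -> keeps_order x y = keeps_order y x.
Proof. by rewrite /keeps_order => /orP[] xy; rewrite xy (lt_gtF xy). Qed.

Lemma keeps_order_adjacent x y z : (x < y) || (y < x) -> (x < z) || (z < x) ->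
  keeps_order x y = keeps_order x z.
Proof.
rewrite /keeps_order => /orP[] xy /orP[] xz; rewrite ?xy ?xz ?(lt_gtF xy) ?(lt_gtF xz).
- exact: lam_lt_common_min.
- by rewrite (lam_lt_chain xz xy).
- exact: lam_lt_chain.
- exact: lam_lt_common_max.
Qed.

Lemma keeps_order_const x y x' y' : poset_connected X ->
  (x < y) || (y < x) -> (x' < y') || (y' < x') -> keeps_order x y = keeps_order x' y'.
Proof.
move=> Xconn xy x'y'.
pose agrees z := [forall w, (z < w) || (w < z) ==> (keeps_order z w == keeps_order x y)].
have agrees_step a b : a >=< b -> agrees a -> agrees b.
  move=> ab; have [<- // | Nab] := eqVneq a b.
  have ba_edge : (b < a) || (a < b).
    by case: (comparable_ltgtP ab) Nab.
  move=> /forallP agrees_a; apply/forallP => w; apply/implyP => bw.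
  rewrite (keeps_order_adjacent bw ba_edge) (keeps_orderC ba_edge).
  by apply: (implyP (agrees_a b)); rewrite orbC.
have agrees_closed : closed (fun a b : X => a >=< b) agrees.
  by move=> a b ab; apply/idP/idP; apply: agrees_step; rewrite // comparable_sym.
have agrees_x : agrees x.
  by apply/forallP => w; apply/implyP => xw; rewrite (keeps_order_adjacent xw xy).
have := closed_connect agrees_closed (Xconn x x'); rewrite [_ \in _]agrees_x.
by move=> /esym/forallP/(_ y')/implyP/(_ x'y')/eqP.
Qed.

Lemma lam_monotone_or_antitone : poset_connected X ->
  {homo lam : x y / x < y} \/ {homo lam : x y / x < y >-> y < x}.
Proof.
move=> Xconn; pose monotone := [forall a : X, forall b : X, (a < b) ==> (lam a < lam b)].
have [mono | /forallPn[a0 /forallPn[b0]]] := boolP monotone.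
  by left => a b; apply/implyP; move/forallP/(_ a)/forallP: mono.
rewrite negb_imply => /andP[a0b0 Nlab0]; right => a b ab.
have := @keeps_order_const a b a0 b0 Xconn.
rewrite /keeps_order ab a0b0 (negbTE Nlab0) => /(_ isT isT) lab_false.
by case/orP: (lam_lt_total ab); rewrite ?lab_false.
Qed.

End JordanEmbedding.

Section OrderMaps.
Variables (d : Order.disp_t) (X : porderType d) (lam : X -> X).
Hypotheses (lam_bij : bijective lam)
  (lam_lt_cmp : forall x y, lam x < lam y -> (x < y) || (y < x)).

Lemma order_automorphism_of_homo_lt :
  {homo lam : x y / x < y} -> order_automorphism lam.
Proof.
move=> mono; split=> // x y; rewrite le_eqVlt => /orP[/eqP | lt].
- by move->; rewrite lexx.
- exact/ltW/mono.
- by move/(bij_inj lam_bij)->; rewrite lexx.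
- case/orP: (lam_lt_cmp lt) => [/ltW // | /mono lt_yx].
  by move: (lt_trans lt_yx lt); rewrite ltxx.
Qed.

Lemma order_anti_automorphism_of_homo_lt :
  {homo lam : x y / x < y >-> y < x} -> order_anti_automorphism lam.
Proof.
move=> anti; split=> // x y; rewrite le_eqVlt => /orP[/eqP | lt].
- by move->; rewrite lexx.
- exact/ltW/anti.
- by move/(bij_inj lam_bij)->; rewrite lexx.
- case/orP: (lam_lt_cmp lt) => [/anti lt_yx | /ltW //].
  by move: (lt_trans lt_yx lt); rewrite ltxx.
Qed.

End OrderMaps.

Section JordanAutomorphism.
Variables (d : Order.disp_t) (X : finPOrderType d) (F : fieldType).
Notation I := (incidence X F).

Lemma jordan_automorphism_embedding (phi : I -> I) (lam : X -> X) :
  jordan_automorphism phi -> (forall x, phi (inc_e F x) = inc_e F (lam x)) ->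
  jordan_embedding phi lam.
Proof.
case=> [[psi phiK _] phi_lin phi_sqr _] phi_e.
have phiD f g : phi (inc_add f g) = inc_add (phi f) (phi g).
  by have := phi_lin 1 f g; rewrite !inc_scale1.
split=> //; last exact: can_inj phiK.
- apply: inc_ext => p; rewrite inc0E; apply: (addrI (inc_val (phi inc0) p)).
  by rewrite addr0 -inc_addE -phiD inc_addr0.
- move=> f g; apply: inc_ext => p.
  have := congr1 (fun h : I => inc_val h p) (phi_sqr (inc_add f g)).
  by rewrite inc_sqrD !phiD inc_sqrD !phi_sqr !inc_addE => /addIr/addrI.
Qed.

Lemma jordan_embedding_can (phi psi : I -> I) (lam mu : X -> X) :
  jordan_embedding phi lam -> cancel phi psi -> cancel psi phi -> cancel mu lam ->
  jordan_embedding psi mu.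
Proof.
case=> phi0 phiJ phi_inj phi_e phiK psiK muK; split.
- by apply: phi_inj; rewrite psiK phi0.
- by move=> f g; apply: phi_inj; rewrite phiJ !psiK.
- exact: can_inj psiK.
- by move=> u; apply: phi_inj; rewrite psiK phi_e muK.
Qed.

End JordanAutomorphism.

Theorem lemma4p2 (d : Order.disp_t) (X : finPOrderType d) (F : fieldType)
    (phi : incidence X F -> incidence X F) (lam : X -> X) :
  poset_connected X ->
  jordan_automorphism phi ->
  bijective lam ->
  (forall x : X, phi (inc_e F x) = inc_e F (lam x)) ->
  order_automorphism lam \/ order_anti_automorphism lam.
Proof.
move=> Xconn Jphi lam_bij phi_e.
have Hphi := jordan_automorphism_embedding Jphi phi_e.
have [psi phiK psiK] : bijective phi by case: Jphi.
have [mu lamK muK] := lam_bij.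
have Hpsi := jordan_embedding_can Hphi phiK psiK muK.
have lam_lt_cmp x y : lam x < lam y -> (x < y) || (y < x).
  by move/(lam_lt_total Hpsi); rewrite !lamK.
have [mono | anti] := lam_monotone_or_antitone Hphi Xconn; [left | right].
  exact: order_automorphism_of_homo_lt.
exact: order_anti_automorphism_of_homo_lt.
Qed.
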